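(* For every integer $d\ge 0$ and every line segment $s$ with $\operatorname{height}(s)=1$ and $\operatorname{width}(s)\le 1$, there exists a $d$-dimensional box type $T$ that contains $s$ when $s$ is translated so that its lower endpoint coincides with the midpoint of the bottom edge of $T$.
   Context: For a compact set $S\subset\mathbb R^2$, $\operatorname{width}(S)=\max_{p,q\in S}|x(p)-x(q)|$ and $\operatorname{height}(S)=\max_{p,q\in S}|y(p)-y(q)|$. A horizontal parallelogram is one with a pair of horizontal edges (its bottom and top edges). Box types: the $0$-dimensional (basic) box type $[\,]$ is a $2\times 1$ axis-parallel rectangle. Given a $d$-dimensional box type $T=[x_1,\dots,x_d]\in\{-1,0,+1\}^d$, which is a horizontal parallelogram of height $1$ with bottom edge $b$ and top edge $t$, partition $b$ into three equally long segments $b_{-1},b_0,b_{+1}$ (from left to right) and likewise $t$ into $t_{-1},t_0,t_{+1}$; for $x_{d+1}\in\{-1,0,+1\}$ the $(d+1)$-dimensional box type $T\oplus[x_{d+1}]=[x_1,\dots,x_{d+1}]$ is the parallelogram with bottom edge $b_0$ and top edge $t_{x_{d+1}}$. (Thus all box types obtained from a fixed basic rectangle share the midpoint of their bottom edges.) *)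

From mathcomp Require Import all_boot all_order all_algebra.
Set Implicit Arguments. Unset Strict Implicit. Unset Printing Implicit Defensive.
Import Order.TTheory GRing.Theory Num.Theory.
Local Open Scope ring_scope.

(* A horizontal parallelogram of height 1 whose bottom edge lies on y = 0 and
   top edge on y = 1, given by its bottom edge [bl, br] x {0} and its top edge
   [tl, tr] x {1} (with br - bl = tr - tl for box types). *)
Record hpar (R : realFieldType) := HPar { bl : R; br : R; tl : R; tr : R }.

Definition in_hpar (R : realFieldType) (P : hpar R) (z : R * R) : Prop :=
  0 <= z.2 <= 1 /\
  (1 - z.2) * bl P + z.2 * tl P <= z.1 <= (1 - z.2) * br P + z.2 * tr P.

Definition basic_box (R : realFieldType) : hpar R := HPar (-1) 1 (-1) 1.

(* T (+) [x]: bottom edge b_0 (middle third of b), top edge t_x. *)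
Definition box_step (R : realFieldType) (P : hpar R) (x : int) : hpar R :=
  let wb := (br P - bl P) / 3%:R in
  let wt := (tr P - tl P) / 3%:R in
  HPar (bl P + wb) (bl P + 2%:R * wb)
       (tl P + (x + 1)%:~R * wt) (tl P + (x + 2)%:~R * wt).

Definition box_type (R : realFieldType) (xs : seq int) : hpar R :=
  foldl (@box_step R) (basic_box R) xs.

Definition box_index (d : nat) (xs : seq int) : bool :=
  (size xs == d) && all (fun x => x \in [:: -1; 0; 1]) xs.

Definition bottom_mid (R : realFieldType) (P : hpar R) : R * R :=
  ((bl P + br P) / 2%:R, 0).

Definition in_segment (R : realFieldType) (p q z : R * R) : Prop :=
  exists2 t : R, 0 <= t <= 1 &
    z = ((1 - t) * p.1 + t * q.1, (1 - t) * p.2 + t * q.2).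

From mathcomp Require Import all_boot all_order all_algebra.
From mathcomp Require Import ring lra.
Set Implicit Arguments. Unset Strict Implicit. Unset Printing Implicit Defensive.
Import Order.TTheory GRing.Theory Num.Theory.
Local Open Scope ring_scope.

(* Every step T (+) [x] keeps the midpoint of the bottom edge, and the three
   choices of x split the top edge of T into thirds that cover it.  So any
   abscissa w on the top edge of the basic box, i.e. -1 <= w <= 1, can be kept
   on the top edge by choosing x_1, ..., x_d one at a time.  Taking for w the
   horizontal run of the segment, the box contains both translated endpoints
   (0, 0) and (w, 1), hence, being convex, the whole segment. *)

Section BoxTypes.

Variable R : realFieldType.
Implicit Types (P : hpar R) (x : int) (w : R).

Lemma box_step_bottom_mid P x : bottom_mid (box_step P x) = bottom_mid P.
Proof. by rewrite /bottom_mid /=; congr (_, _); field; rewrite ?pnatr_eq0. Qed.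

Lemma box_step_bottom_le P x :
  bl P <= br P -> bl (box_step P x) <= br (box_step P x).
Proof.
move=> le_b /=; have : 0 <= (br P - bl P) / 3%:R by apply: divr_ge0; lra.
lra.
Qed.

Lemma box_step_top_cover P w : tl P <= w <= tr P ->
  exists2 x, x \in [:: -1; 0; 1] & tl (box_step P x) <= w <= tr (box_step P x).
Proof.
rewrite /box_step /=; set wt := (tr P - tl P) / 3%:R => w_top.
have tr_thirds : tr P = tl P + 3%:R * wt by rewrite /wt; field; rewrite ?pnatr_eq0.
have [w_le1 | w_gt1] := lerP w (tl P + wt).
  by exists (-1) => //=; rewrite !intrD /=; lra.
have [w_le2 | w_gt2] := lerP w (tl P + 2%:R * wt).
  by exists 0 => //=; lra.
by exists 1 => //=; rewrite !intrD /=; lra.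
Qed.

Lemma bottom_mid_in_bottom P : bl P <= br P -> bl P <= (bottom_mid P).1 <= br P.
Proof. by move=> le_b /=; apply/andP; split; lra. Qed.

Lemma box_steps_reach_top d P w : bl P <= br P -> tl P <= w <= tr P ->
  exists2 xs, box_index d xs &
    let Q := foldl (@box_step R) P xs in
    [/\ bl Q <= br Q, tl Q <= w <= tr Q & bottom_mid Q = bottom_mid P].
Proof.
elim: d P => [|d IHd] P le_b w_top; first by exists [::].
have [x x_idx w_top'] := box_step_top_cover w_top.
have [xs xs_idx [le_b' w_top'' mid]] := IHd _ (box_step_bottom_le x le_b) w_top'.
exists (x :: xs); last by rewrite /= mid box_step_bottom_mid.
by move: xs_idx; rewrite /box_index /= eqSS x_idx.
Qed.

Lemma bottom_mid_basic_box : bottom_mid (basic_box R) = (0, 0).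
Proof. by rewrite /bottom_mid /= addNr mul0r. Qed.

Lemma in_hpar_segment P (a b s : R) :
  bl P <= a <= br P -> tl P <= b <= tr P -> 0 <= s <= 1 ->
  in_hpar P ((1 - s) * a + s * b, s).
Proof.
move=> /andP[bl_a a_br] /andP[tl_b b_tr] /andP[s_ge0 s_le1].
split=> /=; first by rewrite s_ge0 s_le1.
have left_bl : 0 <= (1 - s) * (a - bl P) by apply: mulr_ge0; lra.
have left_br : 0 <= (1 - s) * (br P - a) by apply: mulr_ge0; lra.
have right_tl : 0 <= s * (b - tl P) by apply: mulr_ge0; lra.
have right_tr : 0 <= s * (tr P - b) by apply: mulr_ge0; lra.
apply/andP; split; nra.
Qed.

End BoxTypes.

Theorem lemma14 (R : realFieldType) (d : nat) (p q : R * R) :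
  `|q.2 - p.2| = 1 -> `|q.1 - p.1| <= 1 ->
  let low := if p.2 <= q.2 then p else q in
  exists2 xs : seq int, box_index d xs &
    forall z : R * R, in_segment p q z ->
      in_hpar (box_type R xs)
        (z.1 - low.1 + (bottom_mid (box_type R xs)).1,
         z.2 - low.2 + (bottom_mid (box_type R xs)).2).
Proof.
move=> rise run low; pose high := if p.2 <= q.2 then q else p.
have seg_low_high z : in_segment p q z -> in_segment low high z.
  rewrite /low /high; case: ifP => // _ [t t01 ->].
  by exists (1 - t); [lra | congr (_, _); ring].
have rise1 : high.2 - low.2 = 1.
  (* [lerP] also resolves the norm [`|q.2 - p.2|] in each branch. *)
  by move: rise; rewrite /low /high; case: lerP => _ <-; rewrite ?opprB.
have run1 : -1 <= high.1 - low.1 <= 1.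
  by rewrite -ler_norml /low /high; case: ifP => // _; rewrite distrC.
have basic_le : bl (basic_box R) <= br (basic_box R) by rewrite /=; lra.
have [xs xs_idx [le_b w_top mid]] := box_steps_reach_top d basic_le run1.
have mid0 : bottom_mid (box_type R xs) = (0, 0) := etrans mid (bottom_mid_basic_box R).
have := bottom_mid_in_bottom le_b; rewrite mid bottom_mid_basic_box => zero_bottom.
exists xs => // z /seg_low_high [t t01 ->]; rewrite mid0 /=.
have -> : ((1 - t) * low.1 + t * high.1 - low.1 + 0, (1 - t) * low.2 + t * high.2 - low.2 + 0)
          = ((1 - t) * 0 + t * (high.1 - low.1), t * (high.2 - low.2)).
  by congr (_, _); ring.
by rewrite rise1 mulr1; apply: in_hpar_segment.
Qed.
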